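(* For any graph \(G\), \(OPT(G)\geq 2LP(G)-MM(G)\).
   Context: All graphs are finite, undirected and simple. \(OPT(G)\) is the minimum size of a vertex cover of \(G\) (a set of vertices containing at least one end-point of each edge). \(MM(G)\) is the size of a maximum matching of \(G\). \(LP(G)\) is the optimum value of the linear program: minimize \(\sum_{v\in V(G)}x_v\) subject to \(x_u+x_v\ge 1\) for every edge \(\{u,v\}\in E(G)\) and \(0\le x_v\le 1\) for every \(v\in V(G)\). *)

From HB Require Import structures.
From mathcomp Require Import all_boot all_order all_algebra.
From mathcomp Require Import classical_sets reals.
Set Implicit Arguments. Unset Strict Implicit. Unset Printing Implicit Defensive.
Import Order.TTheory GRing.Theory Num.Theory.

(* A finite simple graph: vertex type T : finType, edge relation e : rel T,
   assumed symmetric and irreflexive (hypotheses of the theorem). *)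
Section Graph.
Variables (T : finType) (e : rel T).

Definition vertex_cover (C : {set T}) : bool :=
  [forall u, forall v, e u v ==> (u \in C) || (v \in C)].

(* OPT(G): minimum size of a vertex cover (the full vertex set is one). *)
Definition OPT : nat :=
  \big[minn/#|T|]_(C : {set T} | vertex_cover C) #|C|.

(* A matching, given as a set of (oriented) edges, pairwise vertex-disjoint
   (so in particular an edge is not listed in both orientations). *)
Definition matching (M : {set T * T}) : bool :=
  [forall p in M, e p.1 p.2] &&
  [forall p in M, forall q in M,
     (p != q) ==> [&& p.1 != q.1, p.1 != q.2, p.2 != q.1 & p.2 != q.2]].

Definition MM : nat := \max_(M : {set T * T} | matching M) #|M|.

Definition LP_feasible (R : realType) (x : T -> R) : Prop :=
  (forall u v, e u v -> 1 <= x u + x v)%R /\ (forall v, 0 <= x v <= 1)%R.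

Definition LP (R : realType) : R :=
  inf [set s : R | exists x : T -> R, LP_feasible x /\ s = (\sum_(v : T) x v)%R].

End Graph.

From HB Require Import structures.
From mathcomp Require Import classical_sets reals.
From mathcomp Require Import all_boot all_order all_algebra lra.
Import Order.TTheory GRing.Theory Num.Theory.
Set Implicit Arguments. Unset Strict Implicit. Unset Printing Implicit Defensive.

(* Take a minimum vertex cover C of G. The edges leaving C form a bipartite
   graph H, which by Koenig's theorem has a vertex cover Z with
   #|Z| <= MM(H) <= MM(G). The half-integral point x = (1_C + 1_Z) / 2 is
   LP-feasible: an edge inside C gets 1/2 + 1/2 from C, an edge leaving C gets
   1/2 from C and 1/2 from Z, and no edge avoids C. Hence
   2 LP(G) <= #|C| + #|Z| <= OPT(G) + MM(G). *)

Section BipartiteMatching.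
Variables (A B : finType) (h : A -> B -> bool).

Definition bmatching (M : {set A * B}) : bool :=
  [forall p in M, h p.1 p.2] &&
  [forall p in M, forall q in M, ((p.1 == q.1) || (p.2 == q.2)) ==> (p == q)].

Lemma bmatchingP (M : {set A * B}) :
  reflect ((forall p, p \in M -> h p.1 p.2) /\
           (forall p q, p \in M -> q \in M -> p.1 = q.1 \/ p.2 = q.2 -> p = q))
          (bmatching M).
Proof.
apply: (iffP andP) => [[/forall_inP Mh /forall_inP Minj]|[Mh Minj]]; split=> //.
- move=> p q pM qM pq; apply/eqP; apply: (implyP (forall_inP (Minj p pM) q qM)).
  by case: pq => ->; rewrite eqxx ?orbT.
- exact/forall_inP.
- apply/forall_inP => p pM; apply/forall_inP => q qM; apply/implyP => /orP pq.
  by apply/eqP; apply: Minj => //; case: pq => /eqP; [left|right].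
Qed.

Lemma bmatching0 : bmatching set0.
Proof. by apply/bmatchingP; split=> p; rewrite inE. Qed.

Lemma bmatchingD1 (M : {set A * B}) p : bmatching M -> bmatching (M :\ p).
Proof.
move=> /bmatchingP[Mh Minj]; apply/bmatchingP; split.
  by move=> q /setD1P[_ /Mh].
by move=> q r /setD1P[_ qM] /setD1P[_ rM]; apply: Minj.
Qed.

Lemma bmatchingU1 (M : {set A * B}) a b :
  bmatching M -> h a b -> (forall b', (a, b') \notin M) ->
  (forall a', (a', b) \notin M) -> bmatching ((a, b) |: M).
Proof.
move=> /bmatchingP[Mh Minj] hab a_free b_free; apply/bmatchingP; split.
  by move=> p /setU1P[->|/Mh].
have fresh q : q \in M -> q.1 <> a /\ q.2 <> b.
  by case: q => a' b' qM; split=> /= E;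
    [move: (a_free b')|move: (b_free a')]; rewrite -E qM.
move=> p q /setU1P[->|pM] /setU1P[->|qM] //; last exact: Minj.
- by have [q1 q2] := fresh q qM; case=> /= E; [case: q1|case: q2]; rewrite E.
- by have [p1 p2] := fresh p pM; case=> /= E; [case: p1|case: p2].
Qed.

Section MaximumMatching.
Variable M : {set A * B}.
Hypothesis M_matching : bmatching M.
Hypothesis M_max : forall M', bmatching M' -> #|M'| <= #|M|.

Definition alt_step a a' := [exists b, h a b && ((a', b) \in M)].
Definition free_left a := [forall b, (a, b) \notin M].
Definition alt_reach := [set a | [exists a0, free_left a0 && connect alt_step a0 a]].

(* A matching of the same size as M obtained by flipping M along an
   alternating path from a free vertex to x; the pairs of M whose left end
   is outside V have not been touched yet. *)
Definition flipped_to (x : A) (V : seq A) : Prop :=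
  exists M', [/\ bmatching M', #|M'| = #|M|, forall b, (x, b) \notin M',
    forall a b, (a, b) \in M' -> exists a', (a', b) \in M &
    forall a b, a \notin V -> (a, b) \in M -> (a, b) \in M'].

Lemma flipped_to_step x y V :
  alt_step x y -> y \notin V -> flipped_to x V -> flipped_to y (y :: V).
Proof.
move=> /existsP[b /andP[hxb yb]] yV [M' [M'm M'card x_free M'right M'keep]].
have yb' : (y, b) \in M' by apply: M'keep.
have [_ M'inj] := bmatchingP _ M'm.
have xy : x != y by apply: contraNneq (x_free b) => ->.
exists ((x, b) |: (M' :\ (y, b))); split.
- apply: bmatchingU1 => // [|b'|a']; first exact: bmatchingD1.
    by rewrite !inE negb_and x_free orbT.
  apply/negP => /setD1P[ab a'b]; case/eqP: ab.
  exact: M'inj a'b yb' (or_intror erefl).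
- by rewrite cardsU1 !inE negb_and x_free orbT -M'card (cardsD1 (y, b) M') yb'.
- move=> b'; rewrite !inE xpair_eqE eq_sym (negbTE xy) /=.
  apply/negP => /andP[/eqP yb'b y_b']; apply: yb'b.
  exact: M'inj y_b' yb' (or_introl erefl).
- by move=> a b' /setU1P[[_ ->]|/setD1P[_ /M'right]] //; exists y.
- move=> a b'; rewrite inE negb_or => /andP[ay aV] ab'M.
  rewrite !inE (M'keep a b') // andbT; apply/orP; right.
  by apply: contraNneq ay => -[/eqP].
Qed.

Lemma flipped_to_path p x V : path alt_step x p -> uniq p ->
  {in p, forall z, z \notin V} -> flipped_to x V ->
  exists V', flipped_to (last x p) V'.
Proof.
elim: p x V => [|y p IH] x V /=; first by move=> _ _ _ fx; exists V.
move=> /andP[xy yp] /andP[yNp p_uniq] pV fx.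
apply: (IH y (y :: V)) => //; last by apply: flipped_to_step fx; rewrite ?pV ?mem_head.
move=> z zp; rewrite inE negb_or pV ?inE ?zp ?orbT // andbT.
by apply: contraNneq yNp => <-.
Qed.

Lemma alt_reach_neighbor_matched a b :
  a \in alt_reach -> h a b -> exists a', (a', b) \in M.
Proof.
move=> aR hab; apply/existsP; apply: contraT => b_free.
move: aR hab; rewrite inE => /existsP[a0 /andP[a0_free /connectP[p a0p ->]]].
case: (shortenP a0p) => p' a0p' /andP[_ p'_uniq] _ hab.
have /flipped_to_path : flipped_to a0 [::].
  by exists M; split=> // [b'|a1 b1 ?]; [move/forallP: a0_free|exists a1].
case/(_ p' a0p' p'_uniq (fun _ _ => isT)) => V [M' [M'm M'card a_free M'right _]].
have M'b_free a' : (a', b) \notin M'.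
  by apply/negP => /M'right [a'' a''b]; case/negP: b_free; apply/existsP; exists a''.
have /M_max := bmatchingU1 M'm hab a_free M'b_free.
by rewrite cardsU1 a_free M'card add1n ltnn.
Qed.

Definition konig_right := [set b | [exists a in alt_reach, h a b]].

Lemma konig_cover a b : h a b -> (a \in ~: alt_reach) || (b \in konig_right).
Proof.
move=> hab; case: (boolP (a \in alt_reach)) => aR; last by rewrite inE aR.
by apply/orP; right; rewrite inE; apply/exists_inP; exists a.
Qed.

Lemma konig_card : #|~: alt_reach| + #|konig_right| <= #|M|.
Proof.
pose S := [set p : A * B | p.1 \in alt_reach].
have left_matched : ~: alt_reach \subset fst @: (M :\: S).
  apply/subsetP => a; rewrite inE => aNR.
  have [b ab] : exists b, (a, b) \in M.
    apply/existsP; apply: contraR aNR => a_free; rewrite inE; apply/existsP.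
    exists a; rewrite connect0 andbT; apply/forallP => b.
    by apply: contraNN a_free => ?; apply/existsP; exists b.
  by apply/imsetP; exists (a, b); rewrite // inE ab andbT inE.
have right_matched : konig_right \subset snd @: (M :&: S).
  apply/subsetP => b; rewrite inE => /exists_inP[a aR hab].
  have [a' a'b] := alt_reach_neighbor_matched aR hab.
  apply/imsetP; exists (a', b); rewrite // !inE a'b /=.
  move: aR; rewrite inE => /existsP[a0 /andP[a0_free a0a]]; apply/existsP; exists a0.
  rewrite a0_free (connect_trans a0a) // connect1 //; apply/existsP; exists b.
  by rewrite hab.
rewrite -(cardsID S M) [X in _ <= X]addnC leq_add //.
  exact: leq_trans (subset_leq_card left_matched) (leq_imset_card _ _).
exact: leq_trans (subset_leq_card right_matched) (leq_imset_card _ _).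
Qed.

End MaximumMatching.

Theorem konig : exists M (X : {set A}) (Y : {set B}),
  [/\ bmatching M, forall a b, h a b -> (a \in X) || (b \in Y) &
      #|X| + #|Y| <= #|M|].
Proof.
have [M M_matching M_max] := arg_maxnP (fun M : {set A * B} => #|M|) bmatching0.
exists M, (~: alt_reach M), (konig_right M); split=> //.
- exact: konig_cover.
- exact: konig_card.
Qed.

End BipartiteMatching.

Section VertexCoverLP.
Variables (T : finType) (e : rel T).

Lemma exists_vertex_cover_le_OPT : exists2 C, vertex_cover e C & #|C| <= OPT e.
Proof.
apply: (big_ind (fun n => exists2 C, vertex_cover e C & #|C| <= n)).
- by exists setT; [apply/'forall_forallP => u v; rewrite inE implybT|rewrite cardsT].
- by move=> m n [C1 ? ?] [C2 ? ?]; case: (leqP m n) => _; [exists C1|exists C2].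
- by move=> C ?; exists C.
Qed.

Variable C : {set T}.

Definition crossing a b := [&& e a b, a \in C & b \notin C].

Lemma crossing_matching M : bmatching crossing M -> matching e M.
Proof.
move=> /bmatchingP[Mh Minj]; apply/andP; split.
  by apply/forall_inP => p /Mh /and3P[].
apply/forall_inP => p pM; apply/forall_inP => q qM; apply/implyP => pq.
have [_ p1C p2C] := and3P (Mh p pM); have [_ q1C q2C] := and3P (Mh q qM).
apply/and4P; split; apply: contraNneq pq => E.
- by rewrite (Minj p q pM qM (or_introl E)).
- by move: q2C; rewrite -E p1C.
- by move: p2C; rewrite E q1C.
- by rewrite (Minj p q pM qM (or_intror E)).
Qed.

Variable R : realType.
Local Open Scope ring_scope.

Lemma LP_le_feasible (x : T -> R) : LP_feasible e x -> LP e R <= \sum_v x v.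
Proof.
move=> x_feas; apply: ge_inf; last by exists x.
by exists 0 => _ [y [[_ y01] ->]]; apply: sumr_ge0 => v _; case/andP: (y01 v).
Qed.

Lemma half_cover_feasible (Z : {set T}) : symmetric e -> vertex_cover e C ->
  (forall u v, crossing u v -> (u \in Z) || (v \in Z)) ->
  LP_feasible e
    (fun v => ((if v \in C then 1 else 0) + (if v \in Z then 1 else 0)) / 2 : R).
Proof.
move=> esym /'forall_forallP C_cover Z_cover; split=> [u v euv|v]; last first.
  by case: (v \in C); case: (v \in Z); apply/andP; split; lra.
have := implyP (C_cover u v) euv.
case: (boolP (u \in C)) => uC; case: (boolP (v \in C)) => vC //= _.
- by case: (u \in Z); case: (v \in Z); lra.
- have /Z_cover : crossing u v by rewrite /crossing euv uC vC.
  by case: (u \in Z); case: (v \in Z) => //= _; lra.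
- have /Z_cover : crossing v u by rewrite /crossing esym euv uC vC.
  by case: (u \in Z); case: (v \in Z) => //= _; lra.
Qed.

End VertexCoverLP.

Theorem lemma1 (R : realType) (T : finType) (e : rel T)
    (esym : symmetric e) (eirr : irreflexive e) :
  (2 * LP e R - (MM e)%:R <= (OPT e)%:R :> R)%R.
Proof.
have [C C_cover C_OPT] := exists_vertex_cover_le_OPT e.
have [M [X [Y [M_matching XY_cover XY_card]]]] := konig (crossing e C).
set Z := X :|: Y.
have Z_cover u v : crossing e C u v -> (u \in Z) || (v \in Z).
  by move/XY_cover; rewrite !inE => /orP[->|->]; rewrite ?orbT.
have Z_MM : #|Z| <= MM e.
  apply: leq_trans (leq_card_setU X Y).1 (leq_trans XY_card _).
  exact: leq_bigmax_cond (crossing_matching M_matching).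
have LP_le := LP_le_feasible (half_cover_feasible R esym C_cover Z_cover).
rewrite -mulr_suml big_split /= -!big_mkcond /= !sumr_const in LP_le.
move: C_OPT Z_MM; rewrite -!(ler_nat R) => C_OPT Z_MM.
lra.
Qed.
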